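(* Let $k\ge2$ be an even integer and $Q_k(t)=t^k+k(t+1)^{k-1}-(t+1)^k$. Then there are constants $\bar C_k,\bar C_k'>0$ depending only on $k$ such that $$\bar C_k(t^{k-2}+1)\le Q_k(t)\le \bar C_k'(t^{k-2}+1)\quad\text{for all }t\in\mathbb{R}.$$ *)

From Stdlib Require Import Reals Lra Lia Arith.
Open Scope R_scope.

Definition Qk (k : nat) (t : R) : R :=
  t ^ k + INR k * (t + 1) ^ (k - 1) - (t + 1) ^ k.

(** Writing [k = m + 2], one has [Q_{m+3}(t) = t Q_{m+2}(t) + (m+2)(t+1)^(m+1)]
    with [Q_2 = 1], so [Q_{m+2}(t) = sum_(i <= m) (i+1) t^(m-i) (t+1)^i].  For
    [t >= 0] all terms are nonnegative and the extreme ones give [t^m] and [1];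
    for [t <= -1] (and [m] even) all terms are again nonnegative; on [-1 <= t <= 0]
    the form [Q_{m+2}(t) = t^(m+2) + (m+1-t)(t+1)^(m+1) >= t^(m+2) + (t+1)^(m+2)]
    is bounded below by a constant.  The upper bound is the triangle inequality
    in the recurrence together with [(|t|+1)^m <= 2^m (|t|^m + 1)]. *)

From Stdlib Require Import Reals Arith Lra Lia.
Open Scope R_scope.

Lemma pow_even_opp m x : Nat.Even m -> (- x) ^ m = x ^ m.
Proof. intros [p ->]. rewrite !pow_mult. f_equal. ring. Qed.

Lemma pow_even_ge0 m x : Nat.Even m -> 0 <= x ^ m.
Proof. intros [p ->]. rewrite pow_mult. apply pow_le. nra. Qed.

Lemma pow_add1_le a m : 0 <= a -> (a + 1) ^ m <= 2 ^ m * (a ^ m + 1).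
Proof.
  intro ha.
  assert (0 <= a ^ m) by (apply pow_le; lra).
  assert (0 <= 2 ^ m) by (apply pow_le; lra).
  destruct (Rle_dec a 1) as [ha1 | ha1].
  - assert ((a + 1) ^ m <= 2 ^ m) by (apply pow_incr; lra). nra.
  - assert ((a + 1) ^ m <= (2 * a) ^ m) by (apply pow_incr; lra).
    rewrite Rpow_mult_distr in *. nra.
Qed.

Lemma pow_half_le_add a b n :
  0 <= a -> 0 <= b -> 1 <= a + b -> (/ 2) ^ n <= a ^ n + b ^ n.
Proof.
  intros ha hb hab.
  assert (0 <= a ^ n) by (apply pow_le; lra).
  assert (0 <= b ^ n) by (apply pow_le; lra).
  destruct (Rle_dec (/ 2) a).
  - assert ((/ 2) ^ n <= a ^ n) by (apply pow_incr; lra). lra.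
  - assert ((/ 2) ^ n <= b ^ n) by (apply pow_incr; lra). lra.
Qed.

Lemma Qk_2 t : Qk 2 t = 1.
Proof. unfold Qk; simpl; ring. Qed.

Lemma Qk_S t n : Qk (S n) t = t ^ S n + (INR n - t) * (t + 1) ^ n.
Proof.
  unfold Qk. replace (S n - 1)%nat with n by lia.
  rewrite S_INR. cbn [pow]. ring.
Qed.

Lemma Qk_rec t m :
  Qk (S (S (S m))) t = t * Qk (S (S m)) t + INR (S (S m)) * (t + 1) ^ S m.
Proof. rewrite !Qk_S, !S_INR. cbn [pow]. ring. Qed.

Lemma Qk_lower_nonneg t m : 0 <= t -> t ^ m + 1 <= 2 * Qk (S (S m)) t.
Proof.
  intro ht. induction m as [|m IH].
  - rewrite Qk_2. simpl. lra.
  - rewrite Qk_rec.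
    assert (1 <= (t + 1) ^ S m) by (apply pow_R1_Rle; lra).
    assert (2 <= INR (S (S m))) by (rewrite !S_INR; pose proof (pos_INR m); lra).
    cbn [pow] in *. nra.
Qed.

Lemma Qk_lower_le_m1 t m : t <= -1 -> (- t) ^ m <= (-1) ^ m * Qk (S (S m)) t.
Proof.
  intro ht. induction m as [|m IH].
  - rewrite Qk_2. simpl. lra.
  - rewrite Qk_rec.
    replace ((-1) ^ S m * (t * Qk (S (S m)) t + INR (S (S m)) * (t + 1) ^ S m))
      with (- t * ((-1) ^ m * Qk (S (S m)) t) + INR (S (S m)) * (- (t + 1)) ^ S m)
      by (replace (- (t + 1)) with (-1 * (t + 1)) by ring;
          rewrite Rpow_mult_distr; cbn [pow]; ring).
    assert (0 <= (- (t + 1)) ^ S m) by (apply pow_le; lra).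
    assert (0 <= INR (S (S m))) by apply pos_INR.
    assert (- t * (- t) ^ m <= - t * ((-1) ^ m * Qk (S (S m)) t))
      by (apply Rmult_le_compat_l; lra).
    change ((- t) ^ S m) with (- t * (- t) ^ m). nra.
Qed.

Lemma Qk_lower_between t m :
  -1 <= t <= 0 -> Nat.Even m -> (/ 2) ^ S (S m) <= Qk (S (S m)) t.
Proof.
  intros ht hm. rewrite Qk_S.
  assert (0 <= (t + 1) ^ S m) by (apply pow_le; lra).
  assert (t + 1 <= INR (S m) - t) by (rewrite S_INR; pose proof (pos_INR m); lra).
  assert (hev : Nat.Even (S (S m))) by (destruct hm as [p ->]; exists (S p); lia).
  rewrite <- (pow_even_opp _ t hev).
  pose proof (pow_half_le_add (- t) (t + 1) (S (S m))).
  cbn [pow] in *. nra.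
Qed.

Lemma Qk_lower t m :
  Nat.Even m -> (/ 2) ^ S (S (S m)) * (t ^ m + 1) <= Qk (S (S m)) t.
Proof.
  intro hm.
  assert (hc : (/ 2) ^ S (S (S m)) <= / 2).
  { assert ((/ 2) ^ S (S m) <= 1) by (rewrite <- (pow1 (S (S m))); apply pow_incr; lra).
    cbn [pow] in *. lra. }
  assert (0 < (/ 2) ^ S (S (S m))) by (apply pow_lt; lra).
  assert (0 <= t ^ m) by (apply pow_even_ge0, hm).
  destruct (Rle_dec 0 t) as [ht0 | ht0]; [|destruct (Rle_dec t (-1)) as [ht1 | ht1]].
  - pose proof (Qk_lower_nonneg t m ht0). nra.
  - pose proof (Qk_lower_le_m1 t m ht1) as h.
    assert (hsign : (-1) ^ m = 1) by (destruct hm as [p ->]; apply pow_1_even).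
    rewrite (pow_even_opp _ _ hm), hsign in h.
    assert (1 <= t ^ m) by (rewrite <- (pow_even_opp _ _ hm); apply pow_R1_Rle; lra).
    nra.
  - assert (t ^ m <= 1).
    { rewrite <- (pow_even_opp _ _ hm), <- (pow1 m). apply pow_incr. lra. }
    pose proof (Qk_lower_between t m ltac:(lra) hm).
    cbn [pow] in *. nra.
Qed.

Lemma Qk_abs_le t m :
  Rabs (Qk (S (S m)) t) <= (INR m + 1) * (INR m + 2) / 2 * (Rabs t + 1) ^ m.
Proof.
  induction m as [|m IH].
  - rewrite Qk_2, Rabs_R1. simpl. lra.
  - rewrite Qk_rec.
    pose proof (Rabs_pos t).
    assert (0 <= (Rabs t + 1) ^ m) by (apply pow_le; lra).
    assert (Rabs ((t + 1) ^ S m) <= (Rabs t + 1) ^ S m).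
    { rewrite <- RPow_abs. apply pow_incr.
      pose proof (Rabs_triang t 1). rewrite Rabs_R1 in *. split; [apply Rabs_pos | lra]. }
    assert (Rabs t * Rabs (Qk (S (S m)) t)
            <= Rabs t * ((INR m + 1) * (INR m + 2) / 2 * (Rabs t + 1) ^ m))
      by (apply Rmult_le_compat_l; lra).
    eapply Rle_trans; [apply Rabs_triang|].
    rewrite !Rabs_mult, (Rabs_right (INR _)) by (apply Rle_ge, pos_INR).
    rewrite !S_INR in *. pose proof (pos_INR m).
    cbn [pow] in *. nra.
Qed.

Lemma Qk_upper t m :
  Nat.Even m -> Qk (S (S m)) t <= (INR m + 1) * (INR m + 2) / 2 * 2 ^ m * (t ^ m + 1).
Proof.
  intro hm.
  pose proof (pow_add1_le (Rabs t) m (Rabs_pos t)) as h.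
  rewrite RPow_abs, (Rabs_right (t ^ m)) in h by (apply Rle_ge, pow_even_ge0, hm).
  pose proof (Qk_abs_le t m).
  pose proof (Rle_abs (Qk (S (S m)) t)).
  assert (0 <= (INR m + 1) * (INR m + 2) / 2) by (pose proof (pos_INR m); nra).
  assert ((INR m + 1) * (INR m + 2) / 2 * (Rabs t + 1) ^ m
          <= (INR m + 1) * (INR m + 2) / 2 * (2 ^ m * (t ^ m + 1)))
    by (apply Rmult_le_compat_l; lra).
  lra.
Qed.

Theorem lemmaA2 (k : nat) (hk2 : (2 <= k)%nat) (hkeven : Nat.Even k) :
  exists C C' : R, 0 < C /\ 0 < C' /\
    forall t : R, C * (t ^ (k - 2) + 1) <= Qk k t /\ Qk k t <= C' * (t ^ (k - 2) + 1).
Proof.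
  destruct hkeven as [[|p] ->]; [lia|].
  replace (2 * S p)%nat with (S (S (2 * p))) by lia.
  replace (S (S (2 * p)) - 2)%nat with (2 * p)%nat by lia.
  assert (hm : Nat.Even (2 * p)) by (exists p; reflexivity).
  set (m := (2 * p)%nat) in *.
  exists ((/ 2) ^ S (S (S m))), ((INR m + 1) * (INR m + 2) / 2 * 2 ^ m).
  split; [apply pow_lt; lra|].
  split.
  - pose proof (pos_INR m). pose proof (pow_lt 2 m ltac:(lra)). nra.
  - intro t. split; [apply Qk_lower | apply Qk_upper]; exact hm.
Qed.
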